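(* The set consisting of the NOR gate and fanout gates (with any number of outputs) parsimoniously simulates, via planar simulations, each of the OR gate, the AND gate, and the crossover.
   Context: A gadget consists of a finite set of ports, equipped with a cyclic order, and a constraint, which is a set of subsets of the ports. A network of gadgets from $S$ is a finite undirected multigraph whose vertices are labeled by gadgets from $S$, each vertex's edge incidences being in bijection with the ports of its label. An assignment orients every edge; a vertex is satisfied if the set of its ports whose edges point into it belongs to its constraint. A simulation using gadgets from $S$ is a network of gadgets from $S$ that may additionally have dangling edges, each incident to only one vertex (equivalently, an extra outside-world vertex whose constraint contains every subset). It is planar if the graph including the outside world has a planar embedding respecting the port cyclic orders; the simulated gadget's ports are then the dangling edges in their order around the simulation. The simulated gadget's constraint consists of each set $D$ of dangling edges such that some assignment satisfying every non-outside-world vertex makes exactly the dangling edges in $D$ point into the simulation. A simulation is parsimonious if for each set in the simulated gadget's constraint there is exactly one such satisfying assignment realizing it; $S$ parsimoniously simulates $G$ if some parsimonious simulation using gadgets from $S$ has simulated gadget $G$. Gadgets: NOR gate: ports $a,b,c$, constraint $\{\emptyset,\{a,c\},\{b,c\},\{a,b,c\}\}$. $k$-way fanout gate: ports $a,c_1,\dots,c_k$, constraint $\{\{a\},\{c_1,\dots,c_k\}\}$. OR gate: ports $a,b,c$, constraint $\{\{c\},\{a\},\{b\},\{a,b\}\}$. AND gate: ports $a,b,c$, constraint $\{\{c\},\{a,c\},\{b,c\},\{a,b\}\}$. Crossover: ports $a_1,b_1,a_2,b_2$ in this cyclic order, constraint $\{\{a_1,b_1\},\{a_2,b_1\},\{a_1,b_2\},\{a_2,b_2\}\}$.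 *)

From mathcomp Require Import all_boot.
Set Implicit Arguments. Unset Strict Implicit. Unset Printing Implicit Defensive.

(* A gadget: ports are 'I_nports, the cyclic order being 0,1,...,nports-1
   (successor ordS); the constraint is a set of subsets of the ports. *)
Record gadget := Gadget {
  nports : nat;
  constr : {set {set 'I_nports}} }.

Definition NOR : gadget :=
  @Gadget 3 [set set0; [set inord 0; inord 2]; [set inord 1; inord 2];
                     [set inord 0; inord 1; inord 2]].
Definition fanout (k : nat) : gadget :=
  @Gadget k.+1 [set [set ord0]; [set i : 'I_k.+1 | i != ord0]].
Definition OR : gadget :=
  @Gadget 3 [set [set inord 2]; [set inord 0]; [set inord 1];
                 [set inord 0; inord 1]].
Definition AND : gadget :=
  @Gadget 3 [set [set inord 2]; [set inord 0; inord 2]; [set inord 1; inord 2];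
                 [set inord 0; inord 1]].
(* crossover: ports a1,b1,a2,b2 = 0,1,2,3 in this cyclic order *)
Definition crossover : gadget :=
  @Gadget 4 [set [set inord 0; inord 1]; [set inord 2; inord 1];
                 [set inord 0; inord 3]; [set inord 2; inord 3]].

Definition NOR_fanout (g : gadget) : Prop :=
  g = NOR \/ exists k, 0 < k /\ g = fanout k.

(* ---------- simulations ----------
   A simulation with m dangling edges: nv vertices labelled by gadgets,
   darts (half-edges) are the ports of the vertices (inl) together with the
   m ports of the outside-world vertex (inr), and [edge] is the pairing of
   darts into edges. *)
Record sim (m : nat) := Sim {
  nv : nat;
  lab : 'I_nv -> gadget;
  edge : ({v : 'I_nv & 'I_(nports (lab v))} + 'I_m)%type ->
         ({v : 'I_nv & 'I_(nports (lab v))} + 'I_m)%type }.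

Arguments nv {m} s.
Arguments lab {m} s _.
Arguments edge {m} s _.

Section Sim.
Variables (m : nat) (s : sim m).

Local Notation sdart := ({v : 'I_(nv s) & 'I_(nports (lab s v))} + 'I_m)%type.

Definition wf_sim (S : gadget -> Prop) : Prop :=
  (forall v, S (lab s v)) /\
  (forall d : sdart, edge s (edge s d) = d) /\
  (forall d : sdart, edge s d <> d) /\
  (forall i : 'I_m, exists x, edge s (inr i) = inl x).

(* rotation system: around each vertex (including the outside world) the
   darts are in the cyclic order of the ports *)
Definition rot (d : sdart) : sdart :=
  match d with
  | inl x => inl (Tagged (fun v => 'I_(nports (lab s v))) (ordS (tagged x)))
  | inr i => inr (ordS i)
  end.

Definition face_perm (d : sdart) : sdart := rot (edge s d).

Definition adj_rel : rel sdart :=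
  fun x y => (y == edge s x) || (y == rot x).

(* Planarity of the graph including the outside world with the given
   rotation system (Heffter-Edmonds): Euler's formula V - E + F = 2 holds in
   every connected component, i.e. 2V + 2F = #darts + 4C (each component has
   V - E + F <= 2).  Vertices without ports (isolated, trivially planar) are
   not darts and are irrelevant. *)
Definition planar_sim : Prop :=
  ((fcard rot predT + fcard face_perm predT).*2 =
     #|predT : pred sdart| + 4 * n_comp adj_rel predT)%N.

(* assignments: a boolean on each dart, true iff the edge points into the
   endpoint owning that dart; the two darts of an edge get opposite values,
   so these are exactly the orientations of all edges *)
Definition assignment (dir : {ffun sdart -> bool}) : Prop :=
  forall d, dir (edge s d) = ~~ dir d.

Definition satisfied (dir : {ffun sdart -> bool}) : Prop :=
  forall v : 'I_(nv s),
    [set p | dir (inl (Tagged (fun v => 'I_(nports (lab s v))) p))]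
      \in constr (lab s v).

Definition inward (dir : {ffun sdart -> bool}) : {set 'I_m} :=
  [set i | ~~ dir (inr i)].

Definition realizes (D : {set 'I_m}) (dir : {ffun sdart -> bool}) : Prop :=
  assignment dir /\ satisfied dir /\ inward dir = D.

End Sim.

Arguments wf_sim {m} s S.
Arguments planar_sim {m} s.
Arguments realizes {m} s D dir.

Definition planar_parsimoniously_simulates (S : gadget -> Prop) (G : gadget) : Prop :=
  exists s : sim (nports G),
    wf_sim s S /\ planar_sim s /\
    (forall D : {set 'I_(nports G)},
        (D \in constr G <-> exists dir, realizes s D dir) /\
        (D \in constr G -> forall dir1 dir2,
            realizes s D dir1 -> realizes s D dir2 -> dir1 = dir2)).

From Pilot Require Import Defs.
From mathcomp Require Import all_boot.
Set Implicit Arguments. Unset Strict Implicit. Unset Printing Implicit Defensive.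

(* Planarity is Euler's
   formula for the rotation system, verified by counting vertex orbits, face
   orbits and connected components through labellings of the darts.  Simulation
   and parsimony rest on one observation: once the directions of the first two
   dangling edges are fixed, unit propagation through the gates forces the
   direction of every edge.  So each of the four input patterns admits at most
   one satisfying assignment, propagation computes it, and the dangling-edge
   patterns so obtained are exactly the constraint of the target gadget.  All
   these conditions are boolean checks on a numbering of the darts, decided by
   evaluation. *)

Definition bits n (X : {set 'I_n}) : seq bool :=
  mkseq (fun j => [exists i : 'I_n, (val i == j) && (i \in X)]) n.

Lemma nth_bits n (X : {set 'I_n}) (i : 'I_n) : nth false (bits X) i = (i \in X).
Proof.
rewrite nth_mkseq //; apply/existsP/idP => [[k /andP[/eqP/val_inj -> //]]|Xi].
by exists i; rewrite eqxx.
Qed.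

Lemma bits_inj n : injective (@bits n).
Proof. by move=> X Y E; apply/setP => i; rewrite -!nth_bits E. Qed.

Lemma bitsE n (X : {set 'I_n}) (P : nat -> bool) :
  (forall i : 'I_n, (i \in X) = P i) -> bits X = mkseq P n.
Proof.
move=> XP; apply: (@eq_from_nth _ false) => [|j]; rewrite !size_mkseq // => jn.
by rewrite -[j]/(val (Ordinal jn)) nth_bits XP nth_mkseq.
Qed.

Lemma bits_set1 n (i : 'I_n) : bits [set i] = mkseq (fun j => j == i) n.
Proof. by apply: bitsE => j; rewrite inE -val_eqE. Qed.

Lemma bits_setU n (A B : {set 'I_n}) :
  bits (A :|: B) = [seq x.1 || x.2 | x <- zip (bits A) (bits B)].
Proof.
apply: (@eq_from_nth _ false) => [|j]; first by rewrite size_map size1_zip ?size_mkseq.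
rewrite size_mkseq => jn; rewrite (nth_map (false, false)) ?size1_zip ?size_mkseq //.
by rewrite nth_zip ?size_mkseq // -[j]/(val (Ordinal jn)) !nth_bits inE.
Qed.

Lemma bits_set0 n : bits (set0 : {set 'I_n}) = mkseq (fun=> false) n.
Proof. by apply: bitsE => i; rewrite inE. Qed.

Lemma bits_set_inord n j : j <= n -> bits [set inord j : 'I_n.+1] = mkseq (fun i => i == j) n.+1.
Proof. by move=> jn; rewrite bits_set1 inordK. Qed.

Ltac bits_of_sets :=
  rewrite !inE -!(inj_eq (@bits_inj _)) ?bits_set0 ?bits_setU !bits_set_inord // -!orbA.

Inductive gate := Nor | Fanout of nat.

Definition gadget_of (g : gate) : gadget := if g is Fanout k then fanout k else NOR.

Notation arity g := (nports (gadget_of g)).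

(* [arity] by evaluation would also evaluate the gadget's constraint. *)
Definition gate_arity (g : gate) := if g is Fanout k then k.+1 else 3.

Lemma gate_arityE g : gate_arity g = arity g.
Proof. by case: g. Qed.

Definition gate_rows (g : gate) : seq (seq bool) :=
  if g is Fanout k then [:: mkseq (fun j => j == 0) k.+1; mkseq (fun j => j != 0) k.+1]
  else [:: [:: false; false; false]; [:: true; false; true];
           [:: false; true; true]; [:: true; true; true]].

Lemma mem_constr_gate g (X : {set 'I_(arity g)}) :
  (X \in constr (gadget_of g)) = (bits X \in gate_rows g).
Proof.
case: g X => [|k] X; first by bits_of_sets.
rewrite !inE -!(inj_eq (@bits_inj _)) bits_set1.
by rewrite (@bitsE _ [set i | i != ord0] (fun j => j != 0)) // => i; rewrite inE.
Qed.

Section SimulationFacts.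
Variables (m : nat) (s : sim m).
Hypothesis edgeK : involutive (edge s).

Lemma rot_inj : injective (@Defs.rot m s).
Proof.
pose back (d : {v : 'I_(nv s) & 'I_(nports (lab s v))} + 'I_m) := match d with
  | inl x => inl (Tagged (fun v => 'I_(nports (lab s v))) (ord_pred (tagged x)))
  | inr i => inr (ord_pred i) end.
by apply: (can_inj (g := back)) => [[x|i]]; rewrite /= ordSK ?taggedK.
Qed.

Lemma face_perm_inj : injective (@face_perm m s).
Proof. by move=> x y /rot_inj /(congr1 (edge s)); rewrite !edgeK. Qed.

Lemma adj_connect_sym : connect_sym (@adj_rel m s).
Proof.
have sym1 x y : @adj_rel m s x y -> connect (@adj_rel m s) y x.
  case/orP=> /eqP ->; first by apply: connect1; rewrite /adj_rel edgeK eqxx.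
  have : fconnect (@Defs.rot m s) (@Defs.rot m s x) x.
    by rewrite fconnect_sym ?fconnect1 //; exact: rot_inj.
  by apply: connect_sub => a b /eqP <-; apply: connect1; rewrite /adj_rel eqxx orbT.
have flip x y : connect (@adj_rel m s) x y -> connect (@adj_rel m s) y x.
  case/connectP=> p + ->; elim: p x => //= z p IH x /andP[xz pz].
  exact: connect_trans (IH _ pz) (sym1 _ _ xz).
by move=> x y; apply/idP/idP; apply: flip.
Qed.

End SimulationFacts.

Section LabelCount.
Variables (T : finType) (N : nat) (code : T -> nat).
Hypotheses (code_inj : injective code) (code_lt : forall x, code x < N)
  (code_onto : forall n, n < N -> exists x, code x = n).

Lemma card_coded : #|predT : pred T| = N.
Proof.
rewrite -(size_image code) -(size_iota 0 N); apply/perm_size/uniq_perm.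
- by rewrite map_inj_uniq ?enum_uniq.
- exact: iota_uniq.
move=> n; rewrite mem_iota /=.
apply/imageP/idP => [[x _ ->]|/code_onto[x <-]]; [exact: code_lt | by exists x].
Qed.

Lemma n_comp_labels (e : rel T) (lbl step : nat -> nat) :
  connect_sym e ->
  (forall x y, e x y -> lbl (code x) = lbl (code y)) ->
  (forall x y, code y = step (code x) -> e x y) ->
  (forall n, n < N -> step n < N /\ exists k, iter k step n = lbl n) ->
  n_comp e predT = size (undup [seq lbl n | n <- iota 0 N]).
Proof.
move=> esym lbl_e step_e walk.
have walk_connect k x : exists2 y, code y = iter k step (code x) & connect e x y.
  elim: k => [|k [y yk xy]]; first by exists x.
  have [z zy] := code_onto (proj1 (walk _ (code_lt y))).
  exists z; first by rewrite iterS -yk zy.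
  exact: connect_trans xy (connect1 (step_e _ _ zy)).
have lbl_connect x y : connect e x y -> lbl (code x) = lbl (code y).
  by case/connectP=> p + ->; elim: p x => //= z p IH x /andP[/lbl_e -> /IH].
have connect_lbl x y : lbl (code x) = lbl (code y) -> connect e x y.
  have rep z : exists2 r, code r = lbl (code z) & connect e z r.
    by have [_ [k <-]] := walk _ (code_lt z); apply: walk_connect.
  move=> E; have [r rx xr] := rep x; have [r' ry yr'] := rep y.
  have rr' : r = r' by apply: code_inj; rewrite rx ry.
  by rewrite esym -rr' in yr'; apply: connect_trans xr yr'.
rewrite /n_comp_mem -(size_image (lbl \o code)); apply/perm_size/uniq_perm.
- rewrite map_inj_in_uniq ?enum_uniq // => x y.
  rewrite !mem_enum => /andP[/eqP rx _] /andP[/eqP ry _].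
  by move/connect_lbl/(rootP esym); rewrite rx ry.
- exact: undup_uniq.
move=> l; rewrite mem_undup; apply/imageP/mapP => [[x _ ->]|[n]].
  by exists (code x); rewrite ?mem_iota ?code_lt.
rewrite mem_iota => /code_onto[x <-] ->; exists (root e x) => //=.
  by rewrite inE roots_root.
by rewrite (lbl_connect _ _ (connect_root e x)).
Qed.

End LabelCount.

Fixpoint block_index (s : seq nat) (n : nat) : nat :=
  if s is a :: s' then (if n < a then 0 else (block_index s' (n - a)).+1) else 0.

Lemma block_index_offset s v p : v < size s -> p < nth 0 s v ->
  block_index s (sumn (take v s) + p) = v.
Proof.
elim: s v => [|a s IH] [|v] //= vs pv; first by rewrite pv.
by rewrite -addnA ltnNge leq_addr /= addKn IH.
Qed.

Lemma block_indexP s n : n < sumn s ->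
  let v := block_index s n in
  v < size s /\ sumn (take v s) <= n < sumn (take v s) + nth 0 s v.
Proof.
elim: s n => [|a s IH] n //= ns; case: (ltnP n a) => [//|an].
have /IH /= [vs /andP[lo hi]] : n - a < sumn s by rewrite ltn_subLR.
by rewrite -leq_subRL // -addnA -ltn_subLR // lo hi.
Qed.

Lemma sumn_take_mono s : {homo (fun v => sumn (take v s)) : v w / v <= w}.
Proof. by move=> v w /subnKC <-; rewrite takeD sumn_cat leq_addr. Qed.

Fixpoint bitseqs n : seq (seq bool) :=
  if n is n'.+1 then [seq b :: bs | b <- [:: true; false], bs <- bitseqs n'] else [:: [::]].

Lemma bitseqsP bs : bs \in bitseqs (size bs).
Proof. by elim: bs => [|b bs IH] //=; rewrite !mem_cat; case: b; rewrite map_f ?orbT. Qed.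

Section Network.
Variables (m : nat) (gates : seq gate) (mates : seq nat).

Definition gate_at v := nth Nor gates v.
Definition arities := [seq gate_arity g | g <- gates].
Definition port_offset v := sumn (take v arities).
Definition ninner := sumn arities.
Definition ndarts := ninner + m.

Lemma nth_arities v : v < size gates -> nth 0 arities v = arity (gate_at v).
Proof. by move=> vs; rewrite (nth_map Nor) ?gate_arityE. Qed.

Definition dart := ({v : 'I_(size gates) & 'I_(arity (gate_at v))} + 'I_m)%type.

Definition port (v : 'I_(size gates)) (p : 'I_(arity (gate_at v))) : dart :=
  inl (Tagged (fun w : 'I_(size gates) => 'I_(arity (gate_at w))) p).

(* The ports of gate v are numbered port_offset v + p and dangling edge i is
   numbered ninner + i; [mates] maps each number to that of the other end of
   its edge. *)
Definition code (d : dart) : nat :=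
  match d with inl x => port_offset (tag x) + tagged x | inr i => ninner + i end.

Lemma port_code_lt v p : v < size gates -> p < arity (gate_at v) ->
  port_offset v + p < ninner.
Proof.
move=> vs pv; have vs' : v < size arities by rewrite size_map.
have := sumn_take_mono arities vs'; rewrite take_size; apply: leq_trans.
by rewrite /port_offset (take_nth 0 vs') sumn_rcons ltn_add2l nth_arities.
Qed.

Lemma port_code_inj v w p q : v < size gates -> w < size gates ->
  p < arity (gate_at v) -> q < arity (gate_at w) ->
  port_offset v + p = port_offset w + q -> v = w /\ p = q.
Proof.
move=> vs ws pv qw E; have vw : v = w.
  rewrite -(@block_index_offset arities v p) ?size_map ?nth_arities // E.
  by rewrite block_index_offset ?size_map ?nth_arities.
by split=> //; subst w; apply/eqP; rewrite -(eqn_add2l (port_offset v)) E.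
Qed.

Lemma code_inj : injective code.
Proof.
case=> [[v p]|i] [[w q]|j] /= E.
- have [/val_inj vw pq] := port_code_inj (ltn_ord v) (ltn_ord w) (ltn_ord p) (ltn_ord q) E.
  by subst w; rewrite (val_inj pq).
- by have := port_code_lt (ltn_ord v) (ltn_ord p); rewrite E ltnNge leq_addr.
- by have := port_code_lt (ltn_ord w) (ltn_ord q); rewrite -E ltnNge leq_addr.
- by move/addnI/val_inj: E => ->.
Qed.

Lemma code_lt d : code d < ndarts.
Proof.
case: d => [[v p]|i] /=; last by rewrite ltn_add2l.
exact: ltn_addr (port_code_lt (ltn_ord v) (ltn_ord p)).
Qed.

Lemma code_onto n : n < ndarts -> exists d, code d = n.
Proof.
move=> nN; case: (ltnP n ninner) => [ni|ni_le].
  have [vs /andP[lo hi]] := block_indexP ni; set v := block_index _ n in vs lo hi.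
  rewrite size_map in vs; rewrite nth_arities // -ltn_subLR // in hi.
  by exists (port (Ordinal hi : 'I_(arity (gate_at (Ordinal vs))))); rewrite /= subnKC.
have im : n - ninner < m by rewrite ltn_subLR.
by exists (inr (Ordinal im)); rewrite /= subnKC.
Qed.

Definition mate n := nth n mates n.

Definition net_edge (d : dart) : dart := odflt d [pick d' | code d' == mate (code d)].

Definition net : sim m := @Sim m (size gates) (fun v => gadget_of (gate_at v)) net_edge.

Definition gates_ok := all (fun g => if g is Fanout k then 0 < k else true) gates.

Definition mates_ok :=
  all (fun n => [&& mate n < ndarts, mate (mate n) == n & mate n != n]) (iota 0 ndarts)
  && all (fun i => mate (ninner + i) < ninner) (iota 0 m).

Definition port_vertex n := block_index arities n.

Definition rot_code n :=
  if n < ninner then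
    let v := port_vertex n in port_offset v + (n - port_offset v).+1 %% gate_arity (gate_at v)
  else ninner + (n - ninner).+1 %% m.

Definition face_code n := rot_code (mate n).

Definition orbit_min (step : nat -> nat) n := foldr minn n (traject step n ndarts).

Definition labels_ok (step lbl : nat -> nat) :=
  all (fun n => [&& step n < ndarts, lbl (step n) == lbl n & lbl n \in traject step n ndarts])
      (iota 0 ndarts).

Definition n_labels (lbl : nat -> nat) := size (undup [seq lbl n | n <- iota 0 ndarts]).

(* [adj_step dist] walks along [adj_rel] whatever [dist] is; with these
   breadth-first distances to dart 0 every walk reaches dart 0. *)
Definition dist_to_0 : seq nat :=
  let relax d := [seq if n == 0 then 0
                      else (minn (nth ndarts d (mate n)) (nth ndarts d (rot_code n))).+1
                 | n <- iota 0 ndarts] in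
  iter ndarts relax (nseq ndarts ndarts).

Definition adj_step (dist : seq nat) n :=
  if nth ndarts dist (mate n) < nth ndarts dist (rot_code n) then mate n else rot_code n.

Definition planar_ok :=
  let rot_lbl := orbit_min rot_code in
  let face_lbl := orbit_min face_code in
  [&& labels_ok rot_code rot_lbl, labels_ok face_code face_lbl,
      labels_ok (adj_step dist_to_0) (fun=> 0) &
      (n_labels rot_lbl + n_labels face_lbl).*2 == ndarts + 4 * n_labels (fun=> 0)].

Lemma code_rot d : code (@Defs.rot m net d) = rot_code (code d).
Proof.
rewrite /rot_code; case: d => [[v p]|i] /=; last by rewrite ltnNge leq_addr /= addKn.
rewrite port_code_lt // /port_vertex block_index_offset ?size_map ?nth_arities //.
by rewrite addKn gate_arityE.
Qed.

Lemma labels_okP step lbl : labels_ok step lbl -> forall n, n < ndarts ->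
  [/\ step n < ndarts, lbl (step n) = lbl n & exists k, iter k step n = lbl n].
Proof.
move=> /allP ok n nN; have := ok n; rewrite mem_iota add0n => /(_ nN).
case/and3P=> sN /eqP closed /trajectP[k _ walk].
by split=> //; exists k.
Qed.

Definition consistent_rows (pv : seq (option bool)) v :=
  [seq r <- gate_rows (gate_at v) |
     all (fun j => if nth None pv (port_offset v + j) is Some b then nth false r j == b else true)
         (iota 0 (gate_arity (gate_at v)))].

Definition forced_value (pv : seq (option bool)) n : option bool :=
  if nth None pv n is Some b then Some b else
  if nth None pv (mate n) is Some b then Some (~~ b) else
  if n < ninner then
    let v := port_vertex n in let p := n - port_offset v in
    if consistent_rows pv v is r :: rs then
      if all (fun r' => nth false r' p == nth false r p) rs then Some (nth false r p) else None
    else None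
  else None.

Definition propagate (pv : seq (option bool)) :=
  iter ndarts (fun pv => map (forced_value pv) (iota 0 ndarts)) pv.

Definition input_valuation (ins : seq 'I_m) (bs : seq bool) :=
  foldr (fun (ib : 'I_m * bool) pv => set_nth None pv (ninner + ib.1) (Some ib.2))
        (nseq ndarts None) (zip ins bs).

Definition solution ins bs := propagate (input_valuation ins bs).

Definition complete (pv : seq (option bool)) :=
  all (fun n => nth None pv n != None) (iota 0 ndarts).

Definition value (pv : seq (option bool)) n := odflt false (nth None pv n).

Definition dir_of pv : {ffun dart -> bool} := [ffun d => value pv (code d)].

Definition outer_bits pv := mkseq (fun i => ~~ value pv (ninner + i)) m.

Definition solution_ok (rowsG : seq (seq bool)) pv :=
  [&& complete pv,
      all (fun n => value pv (mate n) == ~~ value pv n) (iota 0 ndarts),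
      all (fun v => mkseq (fun j => value pv (port_offset v + j)) (gate_arity (gate_at v))
                      \in gate_rows (gate_at v)) (iota 0 (size gates)) &
      outer_bits pv \in rowsG].

Definition agrees (dir : {ffun dart -> bool}) pv :=
  forall d b, nth None pv (code d) = Some b -> dir d = b.

Definition port_set (dir : {ffun dart -> bool}) (v : 'I_(size gates)) :=
  [set p | dir (@port v p)].

Section ValidMates.
Hypothesis matesP : mates_ok.

Lemma mate_spec n : n < ndarts -> [&& mate n < ndarts, mate (mate n) == n & mate n != n].
Proof. by case/andP: matesP => /allP mP _ nN; apply: mP; rewrite mem_iota. Qed.

Lemma code_edge d : code (edge net d) = mate (code d).
Proof.
have /and3P[mN _ _] := mate_spec (code_lt d).
rewrite /= /net_edge; case: pickP => [d' /eqP //|none].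
by have [d' d'm] := code_onto mN; move: (none d'); rewrite d'm eqxx.
Qed.

Lemma net_edgeK : involutive (edge net).
Proof.
move=> d; apply: code_inj; have /and3P[mN /eqP mmK _] := mate_spec (code_lt d).
by rewrite !code_edge mmK.
Qed.

Lemma wf_net : gates_ok -> wf_sim net NOR_fanout.
Proof.
rewrite /gates_ok => /(all_nthP Nor) gatesP; split; [|split; [exact: net_edgeK|split]].
- move=> v; rewrite /= /gate_at; have := gatesP v (ltn_ord v).
  by case: (nth Nor gates v) => [|k] k0; [left | right; exists k].
- move=> d /(congr1 code); rewrite code_edge => md.
  by have /and3P[_ _] := mate_spec (code_lt d); rewrite md eqxx.
- move=> i; case E: (edge net (inr i)) => [x|j]; first by exists x.
  have /andP[_ /allP /(_ (val i))] := matesP.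
  rewrite mem_iota ltn_ord -[ninner + i]/(code (inr i)) -code_edge E => /(_ isT).
  by rewrite /= ltnNge leq_addr.
Qed.

Lemma code_face d : code (@face_perm m net d) = face_code (code d).
Proof. by rewrite /face_perm code_rot code_edge. Qed.

Lemma fcard_labels (f : dart -> dart) step lbl : injective f ->
  (forall d, code (f d) = step (code d)) -> labels_ok step lbl ->
  fcard f predT = n_labels lbl.
Proof.
move=> f_inj f_step /labels_okP ok.
apply: (n_comp_labels code_inj code_lt code_onto (fconnect_sym f_inj) (step := step)).
- move=> x y /eqP <-; rewrite f_step.
  by have [] := ok _ (code_lt x).
- by move=> x y E; apply/eqP/code_inj; rewrite f_step E.
- by move=> n /ok[sN _ walk].
Qed.

Lemma adj_components dist : labels_ok (adj_step dist) (fun=> 0) ->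
  n_comp (@adj_rel m net) predT = n_labels (fun=> 0).
Proof.
move=> /labels_okP ok.
apply: (n_comp_labels code_inj code_lt code_onto (adj_connect_sym net_edgeK)
         (step := adj_step dist)) => //.
- move=> x y; rewrite /adj_step -code_edge -code_rot; case: ifP => _ /code_inj ->;
    by rewrite /adj_rel eqxx ?orbT.
- by move=> n /ok[sN _ walk].
Qed.

Lemma planar_net : planar_ok -> planar_sim net.
Proof.
rewrite /planar_ok => /and4P[rot_ok face_ok adj_ok /eqP euler].
rewrite /planar_sim (card_coded code_inj code_lt code_onto) (adj_components adj_ok).
rewrite (fcard_labels (@rot_inj _ net) code_rot rot_ok).
by rewrite (fcard_labels (face_perm_inj net_edgeK) code_face face_ok).
Qed.

Section Propagation.
Variables (dir : {ffun dart -> bool}).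
Hypotheses (dir_asg : @assignment m net dir) (dir_sat : @satisfied m net dir).

Lemma port_set_consistent pv v : agrees dir pv ->
  bits (port_set dir v) \in consistent_rows pv v.
Proof.
move=> ag; rewrite mem_filter -mem_constr_gate dir_sat andbT.
apply/allP => j; rewrite mem_iota gate_arityE => /andP[_ jv].
case Ej: nth => [bj|] //; rewrite -[j]/(val (Ordinal jv)) nth_bits inE; apply/eqP.
exact: (ag (port (Ordinal jv))).
Qed.

Lemma forced_value_sound pv : agrees dir pv ->
  agrees dir (map (forced_value pv) (iota 0 ndarts)).
Proof.
move=> ag d b; rewrite (nth_map 0) ?size_iota ?code_lt // nth_iota ?code_lt // add0n.
rewrite /forced_value; case E0: (nth None pv (code d)) => [b0|]; first by case=> <-; apply: ag.
case E1: (nth None pv (mate (code d))) => [b1|].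
  by case=> <-; rewrite -code_edge in E1; rewrite -(ag _ _ E1) dir_asg negbK.
case: d E0 E1 => [[v p]|i] /= E0 E1; last by rewrite ltnNge leq_addr.
rewrite port_code_lt // /port_vertex block_index_offset ?size_map ?nth_arities // addKn.
case: (consistent_rows pv v) (port_set_consistent v ag) => [//|r rs].
rewrite inE; case: ifP => // /allP same /orP[/eqP <-|in_rs] [<-].
  by rewrite nth_bits inE.
by have /eqP <- := same _ in_rs; rewrite nth_bits inE.
Qed.

Lemma propagate_sound pv : agrees dir pv -> agrees dir (propagate pv).
Proof.
by move=> ag; rewrite /propagate; elim: {1}ndarts => //= k IH; apply: forced_value_sound.
Qed.

Lemma agrees_input ins : agrees dir (input_valuation ins [seq dir (inr i) | i <- ins]).
Proof.
elim: ins => [|i ins IH] d b /=; first by rewrite nth_nseq; case: ifP.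
rewrite nth_set_nth /=; case: eqP => [E [<-]|_]; last exact: IH.
by rewrite (code_inj (E : code d = code (inr i))).
Qed.

Lemma solution_determines ins :
  complete (solution ins [seq dir (inr i) | i <- ins]) ->
  dir = dir_of (solution ins [seq dir (inr i) | i <- ins]).
Proof.
move=> /allP compl; apply/ffunP => d; rewrite ffunE /value.
have := compl (code d); rewrite mem_iota code_lt => /(_ isT).
case E: nth => [b|] // _; exact: propagate_sound (@agrees_input ins) _ _ E.
Qed.

End Propagation.

Lemma dir_of_assignment rowsG pv : solution_ok rowsG pv -> @assignment m net (dir_of pv).
Proof.
case/and4P=> _ /allP mates_agree _ _ d; rewrite !ffunE code_edge.
by apply/eqP/mates_agree; rewrite mem_iota code_lt.
Qed.

Lemma dir_of_satisfied rowsG pv : solution_ok rowsG pv -> @satisfied m net (dir_of pv).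
Proof.
case/and4P=> _ _ /allP rows_agree _ v; rewrite /= mem_constr_gate.
rewrite (@bitsE _ _ (fun j => value pv (port_offset v + j))) => [|p]; last by rewrite inE ffunE.
by rewrite -gate_arityE; apply: rows_agree; rewrite mem_iota /=.
Qed.

End ValidMates.

Lemma bits_inward pv : bits (@inward m net (dir_of pv)) = outer_bits pv.
Proof. by apply: bitsE => i; rewrite inE ffunE. Qed.

Definition simulation_ok (rowsG : seq (seq bool)) (ins : seq 'I_m) :=
  let sols := [seq solution ins bs | bs <- bitseqs (size ins)] in
  [&& gates_ok, mates_ok, planar_ok, all (solution_ok rowsG) sols &
      all (fun r => has (fun pv => outer_bits pv == r) sols) rowsG].

End Network.

Theorem net_simulates (G : gadget) (rowsG : seq (seq bool)) gates mates
    (ins : seq 'I_(nports G)) :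
  (forall D : {set 'I_(nports G)}, (D \in constr G) = (bits D \in rowsG)) ->
  simulation_ok gates mates rowsG ins ->
  planar_parsimoniously_simulates NOR_fanout G.
Proof.
move=> G_rows /and5P[gok mok pok /allP sols_ok /allP cover].
set s := net (nports G) gates mates.
have det dir : @assignment _ s dir -> @satisfied _ s dir ->
    let pv := solution gates mates ins [seq dir (inr i) | i <- ins] in
    solution_ok (nports G) gates mates rowsG pv /\ dir = dir_of (nports G) gates pv.
  move=> asg sat pv; have pv_ok : solution_ok (nports G) gates mates rowsG pv.
    by apply: (sols_ok pv); apply: map_f; rewrite -(size_map (fun i => dir (inr i))) bitseqsP.
  by split=> //; apply: solution_determines => //; case/and4P: pv_ok.
exists s; split; first exact: wf_net mok gok.
split; first exact: planar_net mok pok.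
move=> D; split; [split|].
- rewrite G_rows => /cover /hasP[pv /sols_ok pv_ok /eqP out].
  exists (dir_of _ gates pv); split; first exact: dir_of_assignment pv_ok.
  split; first exact: dir_of_satisfied pv_ok.
  by apply: bits_inj; rewrite bits_inward out.
- case=> dir [asg [sat <-]]; have [/and4P[_ _ _ out] ->] := det dir asg sat.
  by rewrite G_rows bits_inward.
move=> _ dir1 dir2 [asg1 [sat1 in1]] [asg2 [sat2 in2]].
rewrite (proj2 (det _ asg1 sat1)) (proj2 (det _ asg2 sat2)); congr (dir_of _ _ (solution _ _ _ _)).
apply/eq_map => i; apply: negb_inj.
by have /setP/(_ i) := etrans in1 (esym in2); rewrite !inE.
Qed.

(* The ports a, b (resp. a1, b1) whose directions determine all others. *)
Definition first_two m : seq 'I_m.+2 :=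
  [:: Ordinal (ltn0Sn m.+1); Ordinal (ltn0Sn m : 1 < m.+2)].

Definition OR_gates := [:: Nor; Fanout 2; Nor].
Definition OR_mates := [:: 10; 9; 3; 2; 7; 6; 5; 4; 11; 1; 0; 8].

Definition AND_gates := [:: Fanout 2; Nor; Fanout 2; Nor; Nor].
Definition AND_mates :=
  [:: 15; 4; 3; 2; 1; 13; 16; 10; 9; 8; 7; 12; 11; 5; 17; 0; 6; 14].

Definition crossover_gates :=
  [:: Fanout 2; Fanout 2; Fanout 2; Fanout 2; Nor; Fanout 2; Nor; Nor; Nor; Fanout 2; Fanout 2;
      Fanout 2; Nor; Fanout 2; Nor; Nor; Nor; Fanout 2; Fanout 2; Nor; Fanout 2; Nor; Nor; Nor].
Definition crossover_mates :=
  [:: 72; 54; 6; 73; 9; 33; 2; 19; 13; 4; 12; 21; 10; 8; 15; 14; 18; 22; 16; 7; 25; 11; 17; 24;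
      23; 20; 27; 26; 51; 30; 29; 43; 37; 5; 36; 45; 34; 32; 39; 38; 42; 46; 40; 31; 49; 35; 41; 48;
      47; 44; 74; 28; 57; 63; 1; 67; 58; 52; 56; 60; 59; 66; 64; 53; 62; 69; 61; 55; 70; 65; 68; 75;
      0; 3; 50; 71].

Lemma mem_constr_OR (D : {set 'I_(nports OR)}) :
  (D \in constr OR) = (bits D \in [:: [:: false; false; true]; [:: true; false; false];
                                    [:: false; true; false]; [:: true; true; false]]).
Proof. by bits_of_sets. Qed.

Lemma mem_constr_AND (D : {set 'I_(nports AND)}) :
  (D \in constr AND) = (bits D \in [:: [:: false; false; true]; [:: true; false; true];
                                     [:: false; true; true]; [:: true; true; false]]).
Proof. by bits_of_sets. Qed.

Lemma mem_constr_crossover (D : {set 'I_(nports crossover)}) :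
  (D \in constr crossover) =
  (bits D \in [:: [:: true; true; false; false]; [:: false; true; true; false];
                  [:: true; false; false; true]; [:: false; false; true; true]]).
Proof. by bits_of_sets. Qed.

Theorem mainTheorem14 :
  planar_parsimoniously_simulates NOR_fanout OR /\
  planar_parsimoniously_simulates NOR_fanout AND /\
  planar_parsimoniously_simulates NOR_fanout crossover.
Proof.
split; [|split].
- apply: (@net_simulates OR _ OR_gates OR_mates (first_two 1)); first exact: mem_constr_OR.
  by vm_compute.
- apply: (@net_simulates AND _ AND_gates AND_mates (first_two 1)); first exact: mem_constr_AND.
  by vm_compute.
- apply: (@net_simulates crossover _ crossover_gates crossover_mates (first_two 2)).
    exact: mem_constr_crossover.
  by vm_compute.
Qed.
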